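(* Let $d\ge 2$, $R_0>0$, and let $U:(0,\infty)\to\mathbb{R}$ be a measurable radial kernel profile such that $\int_{R_0}^{\infty}|U(r)|\,r^{d-2}\,e^{-r^2/\delta^2}\,dr<\infty$ for some $\delta>0$. For $\varepsilon>0$ let $U^{\varepsilon}(r)=U(r)\,\operatorname{Erf}(r/\varepsilon)$. Then for every $\varepsilon_{\rm tol}>0$ there exists $\varepsilon_0>0$ such that $$\int_{R_0}^{\infty}|(U-U^{\varepsilon})(r)|\,r^{d-1}\,dr\le\varepsilon_{\rm tol}\qquad\text{for all }0<\varepsilon<\varepsilon_0 .$$
   Context: $\operatorname{Erf}(x)=\frac{2}{\sqrt\pi}\int_0^x e^{-t^2}\,dt$ is the error function. *)

From HB Require Import structures.
From mathcomp Require Import all_boot all_order all_algebra.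
From mathcomp Require Import all_classical all_reals all_analysis.
Set Implicit Arguments. Unset Strict Implicit. Unset Printing Implicit Defensive.
Import Order.TTheory GRing.Theory Num.Theory.
Import numFieldNormedType.Exports.
Local Open Scope classical_set_scope.
Local Open Scope ring_scope.

(* Erf x = 2/sqrt(pi) * \int_0^x exp(-t^2) dt   (used here only for x > 0;
   for x >= 0 this is exactly the usual error function). *)
Definition Erf (R : realType) (x : R) : R :=
  2 / Num.sqrt pi * Rintegral (@lebesgue_measure R) `[0, x] (fun t => expR (- t ^+ 2)).

Definition Ueps (R : realType) (eps : R) (U : R -> R) : R -> R :=
  fun r => U r * Erf (r / eps).

From HB Require Import structures.
From mathcomp Require Import all_boot all_order all_algebra.
From mathcomp Require Import all_classical all_reals all_analysis.
From mathcomp Require Import measurable_realfun ring lra.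
Import Order.TTheory GRing.Theory Num.Theory.
Import numFieldNormedType.Exports.
Local Open Scope classical_set_scope.
Local Open Scope ring_scope.

(* Since [1 + t^2 <= 2 exp(t^2/2)], the Gaussian tail beyond [x >= 0] is at
   most [2 exp(-x^2/2) \int 1/(1+t^2) <= pi exp(-x^2/2)], hence
   [1 - Erf x <= 2 sqrt(pi) exp(-x^2/2)].  At [x = r/eps] the factor
   [exp(-r^2/(2 eps^2))] swallows both the weight [exp(r^2/delta^2)] and the
   extra power of [r], uniformly in [r >= R0], once [eps] is small; so
   [|U - U^eps| r^(d-1) <= c |U| r^(d-2) exp(-r^2/delta^2)] with [c] as small
   as we like, and the integrability hypothesis concludes. *)

Section Erf_tail.
Context {R : realType}.
Local Notation mu := (@lebesgue_measure R).

Lemma gauss_fun_le_oneDsqrV (x t : R) : 0 <= x -> x <= t ->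
  gauss_fun t <= 2 * expR (- x ^+ 2 / 2) * (oneDsqr t)^-1.
Proof.
move=> x0 xt.
have t2_ge0 := sqr_ge0 t.
have oneDsqr_gt0 : 0 < oneDsqr t by rewrite /oneDsqr; lra.
set e := expR (- (t ^+ 2 / 2)).
have e_ge0 : 0 <= e := expR_ge0 _.
have oneDsqr_le : oneDsqr t * e <= 2.
  rewrite /e expRN ler_pdivrMr ?expR_gt0 //.
  by have := expR_ge1Dx (t ^+ 2 / 2); rewrite /oneDsqr; lra.
have e_le : e <= expR (- x ^+ 2 / 2).
  rewrite ler_expR mulNr lerN2 ler_pM2r //.
  by rewrite ler_sqr ?nnegrE // (le_trans x0).
have -> : gauss_fun t = e * e by rewrite /gauss_fun /e -expRD; congr expR; lra.
rewrite ler_pdivlMr // mulrAC.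
apply: le_trans (_ : 2 * e <= _); last exact: ler_wpM2l.
by apply: ler_wpM2r => //; rewrite mulrC.
Qed.

Lemma measurable_oneDsqrV (D : set R) : measurable_fun D (fun t => (oneDsqr t)^-1).
Proof.
by apply: measurable_funTS; apply: continuous_measurable_fun; exact: continuous_oneDsqrV.
Qed.

Lemma measurable_gauss_EFin (D : set R) : measurable_fun D (fun t => (gauss_fun t)%:E).
Proof. by apply/measurable_EFinP; apply: measurable_funTS; exact: measurable_gauss_fun. Qed.

Lemma gauss_tail_le (x : R) : 0 <= x ->
  (\int[mu]_(t in `]x, +oo[) (gauss_fun t)%:E <= (pi * expR (- x ^+ 2 / 2))%:E)%E.
Proof.
move=> x0.
have c_ge0 : 0 <= 2 * expR (- x ^+ 2 / 2) by rewrite mulr_ge0 // expR_ge0.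
have oneDsqrV_ge0 (t : R) : (0 <= ((oneDsqr t)^-1)%:E)%E.
  by rewrite lee_fin invr_ge0 /oneDsqr; have := sqr_ge0 t; lra.
apply: (@le_trans _ _ (\int[mu]_(t in `]x, +oo[)
          ((2 * expR (- x ^+ 2 / 2))%:E * ((oneDsqr t)^-1)%:E))%E).
  apply: ge0_le_integral => //.
  - by move=> t _; rewrite lee_fin gauss_fun_ge0.
  - exact: measurable_gauss_EFin.
  - by apply: emeasurable_funM => //; apply/measurable_EFinP; exact: measurable_oneDsqrV.
  - move=> t; rewrite /= in_itv /= andbT => /ltW xt.
    by rewrite -EFinM lee_fin; apply: gauss_fun_le_oneDsqrV.
rewrite ge0_integralZl_EFin //; last by apply/measurable_EFinP; exact: measurable_oneDsqrV.
apply: (@le_trans _ _ ((2 * expR (- x ^+ 2 / 2))%:E *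
   \int[mu]_(t in `[0%R, +oo[) ((oneDsqr t)^-1)%:E))%E.
  apply: lee_wpmul2l; first by rewrite lee_fin.
  apply: ge0_subset_integral => //; first by apply/measurable_EFinP; exact: measurable_oneDsqrV.
  by move=> t; rewrite /= !in_itv /= !andbT => /ltW; apply: le_trans.
rewrite integral0y_oneDsqr -EFinM lee_fin.
by rewrite (_ : _ * (pi / 2) = pi * expR (- x ^+ 2 / 2)) //; field.
Qed.

Lemma gauss_integral_fin_num (A : set R) : measurable A -> A `<=` `[0, +oo[ ->
  (\int[mu]_(t in A) (gauss_fun t)%:E)%E \is a fin_num.
Proof.
move=> mA A0.
rewrite ge0_fin_numE; last by apply: integral_ge0 => t _; rewrite lee_fin gauss_fun_ge0.
apply: (@le_lt_trans _ _ (\int[mu]_(t in `[0%R, +oo[) (gauss_fun t)%:E)%E).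
  apply: ge0_subset_integral => //.
  - exact: measurable_gauss_EFin.
  - by move=> t _; rewrite lee_fin gauss_fun_ge0.
by rewrite integral0y_gauss ltry.
Qed.

Lemma gauss_integral_cc_fin_num (x : R) :
  (\int[mu]_(t in `[0%R, x]) (gauss_fun t)%:E)%E \is a fin_num.
Proof.
by apply: gauss_integral_fin_num => // t; rewrite /= !in_itv /= => /andP[->].
Qed.

Lemma gauss_integral_oy_fin_num (x : R) : 0 <= x ->
  (\int[mu]_(t in `]x, +oo[) (gauss_fun t)%:E)%E \is a fin_num.
Proof.
move=> x0; apply: gauss_integral_fin_num => // t.
by rewrite /= !in_itv /= !andbT => /ltW; exact: le_trans.
Qed.

Lemma gauss_integral_split (x : R) : 0 <= x ->
  (\int[mu]_(t in `[0%R, x]) (gauss_fun t)%:E + \int[mu]_(t in `]x, +oo[) (gauss_fun t)%:E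
   = (Num.sqrt pi / 2)%:E)%E.
Proof.
move=> x0; rewrite -integral0y_gauss.
rewrite (@itv_bndbnd_setU _ _ (BLeft 0) (BRight x) +oo%O) ?bnd_simp //.
rewrite ge0_integral_setU //.
- exact: measurable_gauss_EFin.
- by move=> t _; rewrite lee_fin gauss_fun_ge0.
- apply: lt_disjoint => a b; rewrite !in_itv /= => /andP[_ ax] /andP[xb _].
  exact: le_lt_trans ax xb.
Qed.

Lemma onemErf (x : R) : 0 <= x ->
  1 - Erf x = 2 / Num.sqrt pi * fine (\int[mu]_(t in `]x, +oo[) (gauss_fun t)%:E)%E.
Proof.
move=> x0.
have sqrtpi_neq0 : Num.sqrt (pi : R) != 0 by rewrite gt_eqF // sqrtr_gt0 pi_gt0.
have := gauss_integral_split x x0.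
rewrite -(fineK (gauss_integral_cc_fin_num x)) -(fineK (gauss_integral_oy_fin_num x x0)).
move=> /(congr1 fine) /= split_eq.
rewrite /Erf /Rintegral -[X in _ * X](addrK (fine (\int[mu]_(t in `]x, +oo[) (gauss_fun t)%:E)%E)).
by rewrite split_eq; field.
Qed.

Lemma onemErf_bounds (x : R) : 0 <= x ->
  0 <= 1 - Erf x <= 2 * Num.sqrt pi * expR (- x ^+ 2 / 2).
Proof.
move=> x0; rewrite onemErf //.
set T := (\int[mu]_(t in _) _)%E.
have sqrtpi_gt0 : 0 < Num.sqrt (pi : R) by rewrite sqrtr_gt0 pi_gt0.
have T_ge0 : 0 <= fine T.
  by apply: fine_ge0; apply: integral_ge0 => t _; rewrite lee_fin gauss_fun_ge0.
have T_le : fine T <= pi * expR (- x ^+ 2 / 2).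
  by rewrite -lee_fin fineK ?gauss_integral_oy_fin_num //; apply: gauss_tail_le.
apply/andP; split; first by rewrite mulr_ge0 // divr_ge0 // ltW.
apply: (le_trans (ler_wpM2l _ T_le)); first by rewrite divr_ge0 // ltW.
suff -> : 2 / Num.sqrt pi * (pi * expR (- x ^+ 2 / 2)) = 2 * Num.sqrt pi * expR (- x ^+ 2 / 2).
  by [].
by rewrite -{2}(sqr_sqrtr (pi_ge0 R)); field; rewrite gt_eqF.
Qed.

Lemma Erf_nondecreasing : {homo @Erf R : x y / x <= y}.
Proof.
move=> x y xy; apply: ler_wpM2l; first by rewrite divr_ge0 // sqrtr_ge0.
apply: fine_le; rewrite ?gauss_integral_cc_fin_num //.
apply: ge0_subset_integral => //.
- exact: measurable_gauss_EFin.
- move=> t; rewrite /= !in_itv /= => /andP[-> ty].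
  exact: le_trans ty xy.
Qed.

Lemma measurable_Erf_scale (eps : R) (D : set R) : 0 < eps -> measurable D ->
  measurable_fun D (fun r => Erf (r / eps)).
Proof.
move=> eps_gt0 mD; apply: nondecreasing_measurable => // x y xy.
by apply: Erf_nondecreasing; rewrite ler_pM2r // invr_gt0.
Qed.

End Erf_tail.

Section Small_eps.
Context {R : realType}.

(* [C r <= c (C / (c R0)) r^2 <= c a r^2 <= c exp (a r^2)] since [r >= R0]. *)
Lemma linear_gauss_le (C c R0 r a : R) : 0 <= C -> 0 < c -> 0 < R0 -> R0 <= r ->
  C / (c * R0) <= a -> C * r * expR (- (a * r ^+ 2)) <= c.
Proof.
move=> C_ge0 c_gt0 R0_gt0 R0r Ma.
have r_gt0 : 0 < r by exact: lt_le_trans R0_gt0 R0r.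
set M := C / (c * R0) in Ma.
have M_ge0 : 0 <= M by rewrite divr_ge0 // mulr_ge0 // ltW.
rewrite expRN ler_pdivrMr ?expR_gt0 //.
have Cr_le : C * r <= c * (M * r ^+ 2).
  have -> : c * (M * r ^+ 2) = C * r * (r / R0).
    by rewrite /M; field; rewrite ?gt_eqF // ?mulr_gt0.
  rewrite ler_peMr ?mulr_ge0 ?(ltW r_gt0) //.
  by rewrite ler_pdivlMr // mul1r.
apply: (le_trans Cr_le); apply: ler_wpM2l; first exact: ltW.
apply: le_trans (expR_ge1Dx (a * r ^+ 2)).
have : M * r ^+ 2 <= a * r ^+ 2 by rewrite ler_wpM2r // sqr_ge0.
lra.
Qed.

Lemma small_eps_invsqr (A : R) :
  exists2 eps0 : R, 0 < eps0 & forall eps, 0 < eps -> eps < eps0 -> A <= (2 * eps ^+ 2)^-1.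
Proof.
have A1_gt0 : 0 < `|A| + 1 by rewrite ltr_wpDl.
exists (2 * (`|A| + 1))^-1; first by rewrite invr_gt0 mulr_gt0.
move=> eps eps_gt0; rewrite -[_^-1]mul1r ltr_pdivlMr ?mulr_gt0 // => eps_lt.
have A_le : A <= `|A| + 1 by have := ler_norm A; lra.
apply: (le_trans A_le); rewrite -[_^-1]mul1r ler_pdivlMr ?mulr_gt0 ?exprn_gt0 //.
have eps_lt1 : eps < 1.
  have : 0 <= eps * `|A| by rewrite mulr_ge0 // ltW.
  lra.
have : eps * (eps * (2 * (`|A| + 1))) < eps * 1 by rewrite ltr_pM2l.
lra.
Qed.

Lemma onemErf_scale_le (c R0 delta : R) : 0 < c -> 0 < R0 -> 0 < delta ->
  exists2 eps0 : R, 0 < eps0 & forall eps r, 0 < eps -> eps < eps0 -> R0 <= r ->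
    (1 - Erf (r / eps)) * r <= c * expR (- r ^+ 2 / delta ^+ 2).
Proof.
move=> c_gt0 R0_gt0 delta_gt0.
pose C : R := 2 * Num.sqrt pi.
have C_ge0 : 0 <= C by rewrite mulr_ge0 // sqrtr_ge0.
have [eps0 eps0_gt0 small] := small_eps_invsqr (C / (c * R0) + (delta ^+ 2)^-1).
exists eps0 => // eps r eps_gt0 eps_lt R0r.
have r_gt0 : 0 < r by exact: lt_le_trans R0_gt0 R0r.
pose a := (2 * eps ^+ 2)^-1 - (delta ^+ 2)^-1.
have a_ge : C / (c * R0) <= a by rewrite /a lerBrDr; exact: small.
have [_ onemErf_le] := andP (onemErf_bounds (r / eps) (divr_ge0 (ltW r_gt0) (ltW eps_gt0))).
apply: (le_trans (ler_wpM2r (ltW r_gt0) onemErf_le)).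
have -> : expR (- (r / eps) ^+ 2 / 2) =
    expR (- r ^+ 2 / delta ^+ 2) * expR (- (a * r ^+ 2)).
  by rewrite -expRD; congr expR; rewrite /a; field; rewrite ?gt_eqF ?exprn_gt0.
have -> : 2 * Num.sqrt pi * (expR (- r ^+ 2 / delta ^+ 2) * expR (- (a * r ^+ 2))) * r
    = C * r * expR (- (a * r ^+ 2)) * expR (- r ^+ 2 / delta ^+ 2) by rewrite /C; ring.
by rewrite ler_wpM2r ?expR_ge0 //; exact: linear_gauss_le a_ge.
Qed.

End Small_eps.

Lemma ge0_integral_le_scale {d : measure_display} {T : measurableType d}
    {R : realType} (mu : {measure set T -> \bar R}) {D : set T} {f g : T -> R} {c : R} :
  measurable D -> measurable_fun D f -> measurable_fun D g -> 0 <= c ->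
  (forall x, D x -> 0 <= f x) -> (forall x, D x -> 0 <= g x) ->
  (forall x, D x -> f x <= c * g x) ->
  (\int[mu]_(x in D) (f x)%:E <= c%:E * \int[mu]_(x in D) (g x)%:E)%E.
Proof.
move=> mD mf mg c_ge0 f_ge0 g_ge0 f_le.
have gE_ge0 x : D x -> (0 <= (g x)%:E)%E by move/g_ge0; rewrite lee_fin.
rewrite -ge0_integralZl_EFin //; last exact/measurable_EFinP.
apply: ge0_le_integral => //; first exact/measurable_EFinP.
by apply: emeasurable_funM => //; exact/measurable_EFinP.
Qed.

Section Ueps_error.
Context {R : realType} {U : R -> R}.

Lemma normr_sub_Ueps (eps r : R) : 0 <= r / eps ->
  `|U r - Ueps eps U r| = `|U r| * (1 - Erf (r / eps)).
Proof.
move=> /(onemErf_bounds (r / eps)) /andP[onemErf_ge0 _].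
have -> : U r - Ueps eps U r = U r * (1 - Erf (r / eps)) by rewrite /Ueps; ring.
by rewrite normrM (ger0_norm onemErf_ge0).
Qed.

Lemma Ueps_error_le (n : nat) (c delta eps r : R) : 0 < eps -> 0 < r ->
  (1 - Erf (r / eps)) * r <= c * expR (- r ^+ 2 / delta ^+ 2) ->
  `|U r - Ueps eps U r| * r ^+ n.+1
    <= c * (`|U r| * r ^+ n * expR (- r ^+ 2 / delta ^+ 2)).
Proof.
move=> eps_gt0 r_gt0 onemErf_le.
have r_ge0 := ltW r_gt0.
rewrite normr_sub_Ueps ?divr_ge0 ?(ltW eps_gt0) // exprS.
have -> : `|U r| * (1 - Erf (r / eps)) * (r * r ^+ n)
    = `|U r| * r ^+ n * ((1 - Erf (r / eps)) * r) by ring.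
have -> : c * (`|U r| * r ^+ n * expR (- r ^+ 2 / delta ^+ 2))
    = `|U r| * r ^+ n * (c * expR (- r ^+ 2 / delta ^+ 2)) by ring.
by rewrite ler_wpM2l // mulr_ge0 ?exprn_ge0.
Qed.

Context {D : set R} (mD : measurable D) (mU : measurable_fun D U).

Lemma measurable_Ueps_error (n : nat) (eps : R) : 0 < eps ->
  measurable_fun D (fun r => `|U r - Ueps eps U r| * r ^+ n).
Proof.
move=> eps_gt0; apply: measurable_funM => //; apply: measurableT_comp => //.
apply: measurable_funB => //; apply: measurable_funM => //.
exact: measurable_Erf_scale.
Qed.

Lemma measurable_gauss_weighted (n : nat) (delta : R) :
  measurable_fun D (fun r => `|U r| * r ^+ n * expR (- r ^+ 2 / delta ^+ 2)).
Proof.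
apply: measurable_funM; first apply: measurable_funM.
- by apply: measurableT_comp => //; exact: normr_measurable.
- exact: exprn_measurable.
- apply: measurableT_comp; first exact: measurable_expR.
  by apply: measurable_funM => //; apply: measurableT_comp => //; exact: exprn_measurable.
Qed.

End Ueps_error.

Theorem theorem4p1 (R : realType) (d : nat) (R0 : R) (U : R -> R)
  (hd : (2 <= d)%N) (hR0 : 0 < R0)
  (hU : measurable_fun (`]0, +oo[ : set R) U)
  (hint : exists delta : R, 0 < delta /\
     (\int[@lebesgue_measure R]_(r in `[R0, +oo[)
         (`|U r| * r ^+ (d - 2) * expR (- r ^+ 2 / delta ^+ 2))%:E < +oo)%E) :
  forall tol : R, 0 < tol ->
  exists eps0 : R, 0 < eps0 /\
    forall eps : R, 0 < eps -> eps < eps0 ->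
      (\int[@lebesgue_measure R]_(r in `[R0, +oo[)
          (`|(U r - Ueps eps U r)| * r ^+ (d - 1))%:E <= tol%:E)%E.
Proof.
move=> tol tol_gt0; have [delta [delta_gt0 J_lty]] := hint.
set D := `[R0, +oo[%classic.
have mD : measurable D by exact: measurable_itv.
have r_gt0 r : D r -> 0 < r by rewrite /D /= in_itv /= andbT; exact: lt_le_trans.
have mU : measurable_fun D U.
  by apply: measurable_funS hU => // r /r_gt0; rewrite /= in_itv /= andbT.
pose h r := `|U r| * r ^+ (d - 2) * expR (- r ^+ 2 / delta ^+ 2).
have h_ge0 r : D r -> 0 <= h r.
  by move=> /r_gt0/ltW r_ge0; rewrite /h !mulr_ge0 ?expR_ge0 ?exprn_ge0.
pose J := (\int[@lebesgue_measure R]_(r in D) (h r)%:E)%E.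
have J_ge0 : (0 <= J)%E by apply: integral_ge0 => r /h_ge0; rewrite lee_fin.
have J_fin : J \is a fin_num by rewrite ge0_fin_numE.
pose c := tol / (fine J + 1).
have c_gt0 : 0 < c by rewrite divr_gt0 // ltr_wpDl // fine_ge0.
have [eps0 eps0_gt0 onemErf_le] := onemErf_scale_le _ _ _ c_gt0 hR0 delta_gt0.
exists eps0; split => // eps eps_gt0 eps_lt.
have d1E : (d - 1 = (d - 2).+1)%N by rewrite subnSK.
apply: (@le_trans _ _ (c%:E * J)%E).
  apply: (ge0_integral_le_scale (@lebesgue_measure R) mD
    (measurable_Ueps_error mD mU (d - 1) eps eps_gt0)
    (measurable_gauss_weighted mU (d - 2) delta) (ltW c_gt0) _ h_ge0).
  - by move=> r /r_gt0/ltW r_ge0; rewrite mulr_ge0 ?exprn_ge0.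
  - move=> r Dr; rewrite d1E; apply: Ueps_error_le => //; first exact: r_gt0.
    by apply: onemErf_le; move: Dr; rewrite /D /= in_itv /= andbT.
rewrite -(fineK J_fin) -EFinM lee_fin /c mulrAC ler_pdivrMr ?ltr_wpDl ?fine_ge0 //.
by rewrite ler_wpM2l ?(ltW tol_gt0) // lerDl.
Qed.
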